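(* For every instance $I$ of fully-symmetric adversarial multi-agent delegation in which all distributions have finite support, there exists an analogous instance $I'$ of strategic multi-agent delegation such that for every single-proposal mechanism $M'$ for $I'$ and every equilibrium $\sigma'$ induced by $M'$ on $I'$, there exists a single-proposal mechanism $M$ for $I$ with $f_{I,M}=f_{I',M',\sigma'}$.
   Context: Strategic multi-agent delegation: $k$ agents; agent $i$ holds elements $e_{i,1},\dots,e_{i,m_i}$. Each element $e$ has a random outcome $V(e)$ drawn from a distribution over its own outcome set $\Omega(e)$ (disjoint across elements), the $V(e)$ mutually independent; each outcome $\omega$ has principal utility $x(\omega)$ and utility $y(\omega)$ for the agent holding $e$. Each agent's type is the realized outcomes of its elements; a type profile lists all types. A mechanism consists of signal sets $\Sigma_i$ and $g:\Sigma_1\times\dots\times\Sigma_k\to\Omega\cup\{\bot\}$; if $g$ outputs an outcome $\omega$ truly observed by agent $i$, the principal gets $x(\omega)$, agent $i$ gets $y(\omega)$ (agent $i$ wins), others $0$; otherwise all get $0$. Players maximize expected utility, ties broken in favor of the principal; all but realizations is common knowledge; no collusion. An induced equilibrium is a Bayes–Nash equilibrium of the agents under the mechanism. Adversarial multi-agent delegation is the same model without $y$-values, where each agent acts to minimize the principal's expected utility subject to keeping a positive probability of winning. Fully-symmetric: all agents have the same number of elements and all $V(e)$ are identically distributed (as abstract distributions, up to the identification of outcome sets). A strategic instance $I'$ and adversarial instance $I$ are analogous if they coincide up to isomorphism apart from the $y$-values. Single-proposal mechanism: sets $R_i\subseteq\Omega_i$ (outcomes of agent $i$'s elements) and a tie-breaking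 order on elements; each agent proposes one of its elements with its observed outcome; the principal accepts, among proposed outcomes $\omega$ from agents $i$ with $\omega\in R_i$, one maximizing $x(\omega)$ (ties by the order), else rejects. $f_{I',M',\sigma'}$ is the map sending each type profile to the accepted outcome (or $\bot$) under $M'$ with strategies $\sigma'$; $f_{I,M}$ is the same map for adversarial agents under $M$. *)

From HB Require Import structures.
From mathcomp Require Import all_boot all_order all_algebra.
From mathcomp Require Import reals.
Set Implicit Arguments. Unset Strict Implicit. Unset Printing Implicit Defensive.
Import Order.TTheory GRing.Theory Num.Theory.
Local Open Scope ring_scope.

(* Fully-symmetric instance: k agents, each holding m elements; every element's
   outcome is drawn from the common finite outcome type [Om] with distribution
   [p] (full support) and principal utility [x].  The outcome of element j of
   agent i with realized value w is identified with the triple (i, j, w), so the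
   outcome sets of distinct elements are disjoint. *)

Definition outcome (k m : nat) (Om : finType) := ('I_k * 'I_m * Om)%type.

Definition agent_type (m : nat) (Om : finType) := {ffun 'I_m -> Om}.
Definition profile (k m : nat) (Om : finType) := {ffun 'I_k -> agent_type m Om}.

Definition prof_prob (R : realType) k m (Om : finType) (p : Om -> R)
  (t : profile k m Om) : R := \prod_(i < k) \prod_(j < m) p (t i j).

(* Single-proposal mechanism: acceptance sets R_i (as predicates on agent i's
   outcomes (i, j, w)) and a tie-breaking (strict total) order on elements,
   given by an injective rank. *)
Record SPM (k m : nat) (Om : finType) := {
  accset : 'I_k -> 'I_m -> Om -> bool;
  rank : 'I_k * 'I_m -> nat;
  rank_inj : injective rank }.

Definition strategy (k m : nat) (Om : finType) := 'I_k -> agent_type m Om -> 'I_m.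

Section Mech.
Context (R : realType) (k m : nat) (Om : finType) (x : Om -> R) (M : SPM k m Om).

Definition acceptable (t : profile k m Om) (a : 'I_k -> 'I_m) (i : 'I_k) : bool :=
  accset M i (a i) (t i (a i)).

Definition beats (t : profile k m Om) (a : 'I_k -> 'I_m) (i i2 : 'I_k) : bool :=
  (x (t i2 (a i2)) < x (t i (a i))) ||
  ((x (t i (a i)) == x (t i2 (a i2))) && (rank M (i, a i) < rank M (i2, a i2))%N).

Definition accepted (t : profile k m Om) (a : 'I_k -> 'I_m) : option (outcome k m Om) :=
  match [pick i | acceptable t a i &&
           [forall i2, acceptable t a i2 ==> (i2 == i) || beats t a i i2]] with
  | Some i => Some (i, a i, t i (a i))
  | None => None
  end.

Definition principal_util (o : option (outcome k m Om)) : R :=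
  if o is Some (_, _, w) then x w else 0.

Definition agent_util (y : 'I_k -> 'I_m -> Om -> R) (l : 'I_k)
  (o : option (outcome k m Om)) : R :=
  if o is Some (i, j, w) then (if i == l then y i j w else 0) else 0.

Definition wins (l : 'I_k) (o : option (outcome k m Om)) : bool :=
  if o is Some (i, _, _) then i == l else false.

Definition dev_actions (sigma : strategy k m Om) (t : profile k m Om)
  (l : 'I_k) (b : 'I_m) : 'I_k -> 'I_m :=
  fun i => if i == l then b else sigma i (t i).

Definition outcome_map (sigma : strategy k m Om) (t : profile k m Om) :
  option (outcome k m Om) := accepted t (fun i => sigma i (t i)).

Context (p : Om -> R).

(* interim expectations of agent l of type tau when it plays b, up to the
   positive normalizing factor Pr[tau] *)
Definition interim (sigma : strategy k m Om) (l : 'I_k) (tau : agent_type m Om)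
  (b : 'I_m) (u : option (outcome k m Om) -> R) : R :=
  \sum_(t : profile k m Om | t l == tau)
     prof_prob p t * u (accepted t (dev_actions sigma t l b)).

(* Bayes-Nash equilibrium of strategic agents (utility y), with each agent's
   ties broken in favor of the principal. *)
Definition strategic_eq (y : 'I_k -> 'I_m -> Om -> R) (sigma : strategy k m Om) :
  Prop :=
  forall (l : 'I_k) (tau : agent_type m Om) (b : 'I_m),
    interim sigma l tau b (agent_util y l)
      <= interim sigma l tau (sigma l tau) (agent_util y l) /\
    (interim sigma l tau b (agent_util y l)
       = interim sigma l tau (sigma l tau) (agent_util y l) ->
     interim sigma l tau b principal_util
       <= interim sigma l tau (sigma l tau) principal_util).

Definition adversarial_eq (sigma : strategy k m Om) : Prop :=
  forall (l : 'I_k) (tau : agent_type m Om) (b : 'I_m),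
    0 < interim sigma l tau b (fun o => (wins l o)%:R) ->
    0 < interim sigma l tau (sigma l tau) (fun o => (wins l o)%:R) /\
    interim sigma l tau (sigma l tau) principal_util
      <= interim sigma l tau b principal_util.

End Mech.

From HB Require Import structures.
From mathcomp Require Import all_boot all_order all_algebra.
From mathcomp Require Import reals.
Import Order.TTheory GRing.Theory Num.Theory.
Local Open Scope ring_scope.

(* Weight each outcome w by y(w) = c ^ n(w), where n(w) counts the outcomes
   with strictly larger principal utility, and take c so large that c times
   the least probability of a type profile exceeds the total mass.  A strategic
   agent then prefers any positive chance of winning with an outcome of lower
   principal utility to every chance of winning with a higher one: in a
   strategic equilibrium, an agent that can win at all proposes, among the
   elements it can win with, one whose outcome is worst for the principal.
   Since the principal accepts the best acceptable proposal, lowering one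
   agent's acceptable proposal lowers the accepted outcome profile by profile,
   so the strategic equilibrium is already an adversarial equilibrium of the
   same mechanism. *)

Definition interim_win {R : realType} {k m : nat} {Om : finType} (x : Om -> R)
    (M : SPM k m Om) (p : Om -> R) (sigma : strategy k m Om) (l : 'I_k)
    (tau : agent_type m Om) (b : 'I_m) : R :=
  interim x M p sigma l tau b (fun o => (wins l o)%:R).

Section SingleProposal.
Context {R : realType} {k m : nat} {Om : finType} {x : Om -> R} {M : SPM k m Om}.
Implicit Types (t : profile k m Om) (a : 'I_k -> 'I_m).

Lemma beats_le t a i j : beats x M t a i j -> x (t j (a j)) <= x (t i (a i)).
Proof. by case/orP => [/ltW // | /andP [/eqP -> _]]. Qed.

Lemma beats_irr t a i : ~~ beats x M t a i i.
Proof. by rewrite /beats ltxx ltnn andbF. Qed.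

Lemma beats_trans {t a i j l} :
  beats x M t a i j -> beats x M t a j l -> beats x M t a i l.
Proof.
move=> /orP[h1|/andP[/eqP e1 r1]] /orP[h2|/andP[/eqP e2 r2]]; apply/orP.
- by left; apply: lt_trans h2 h1.
- by left; rewrite -e2.
- by left; rewrite e1.
- by right; rewrite e1 e2 eqxx (ltn_trans r1 r2).
Qed.

Lemma beats_total t a i j : i != j -> beats x M t a i j || beats x M t a j i.
Proof.
move=> nij; rewrite /beats.
case: (ltgtP (x (t j (a j))) (x (t i (a i)))) => //= _.
have : rank M (i, a i) != rank M (j, a j).
  by apply: contra nij => /eqP /rank_inj [->].
by rewrite eq_sym; case: ltngtP.
Qed.

(* The acceptable proposal beaten by the fewest acceptable proposals beats
   all the others. *)
Lemma exists_top_acceptable {t a i} : acceptable M t a i ->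
  exists j, acceptable M t a j &&
    [forall i2, acceptable M t a i2 ==> (i2 == j) || beats x M t a j i2].
Proof.
move=> acc_i.
pose beaters j := [pred i2 | acceptable M t a i2 && beats x M t a i2 j].
case: (arg_minnP (fun j => #|beaters j|) acc_i) => j acc_j j_min.
have unbeaten i2 : acceptable M t a i2 -> ~~ beats x M t a i2 j.
  move=> acc_i2; apply/negP => i2_j.
  suff : (#|beaters i2| < #|beaters j|)%N by rewrite ltnNge j_min.
  apply: proper_card; apply/properP; split.
    apply/subsetP => i3; rewrite !inE => /andP [acc_i3 i3_i2].
    by rewrite acc_i3 (beats_trans i3_i2 i2_j).
  by exists i2; rewrite !inE ?acc_i2 ?i2_j ?(negbTE (beats_irr _ _ _)).
exists j; rewrite acc_j; apply/forallP => i2; apply/implyP => acc_i2.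
case: (eqVneq i2 j) => //= ne.
by have := beats_total t a i2 j ne; rewrite (negbTE (unbeaten _ acc_i2)).
Qed.

Lemma accepted_top {t a i} : acceptable M t a i ->
  exists j, [/\ accepted x M t a = Some (j, a j, t j (a j)), acceptable M t a j &
    forall i2, acceptable M t a i2 -> x (t i2 (a i2)) <= x (t j (a j))].
Proof.
move=> acc_i; rewrite /accepted.
case: pickP => [j /andP [acc_j /forallP top_j] | none].
  exists j; split => // i2 acc_i2.
  by have := top_j i2; rewrite acc_i2 => /orP [/eqP -> // | /beats_le].
have [j top_j] := exists_top_acceptable acc_i.
by have := none j; rewrite top_j.
Qed.

Lemma wins_accepted {t a l} : wins l (accepted x M t a) ->
  accepted x M t a = Some (l, a l, t l (a l)) /\ acceptable M t a l.
Proof.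
rewrite /accepted; case: pickP => [i /andP [acc_i _] | _] //=.
by move/eqP => e; subst i.
Qed.

Lemma accepted_util_le t a1 a2 l : (forall i, i != l -> a1 i = a2 i) ->
  acceptable M t a1 l -> acceptable M t a2 l ->
  x (t l (a1 l)) <= x (t l (a2 l)) ->
  principal_util x (accepted x M t a1) <= principal_util x (accepted x M t a2).
Proof.
move=> same_other acc1 acc2 le_l.
have [j1 [-> acc_j1 _]] := accepted_top acc1.
have [j2 [-> _ top_j2]] := accepted_top acc2.
case: (eqVneq j1 l) => [-> | ne]; first exact: le_trans le_l (top_j2 _ acc2).
by move: acc_j1; rewrite /= /acceptable !same_other // => /top_j2.
Qed.

Lemma acceptable_dev (sigma : strategy k m Om) t l b :
  acceptable M t (dev_actions sigma t l b) l = accset M l b (t l b).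
Proof. by rewrite /acceptable /dev_actions eqxx. Qed.

Section Interim.
Context {p : Om -> R} {sigma : strategy k m Om}.
Hypothesis p_gt0 : forall w, 0 < p w.

Lemma prof_prob_gt0 t : 0 < prof_prob p t.
Proof. by apply: prodr_gt0 => i _; apply: prodr_gt0. Qed.

Section AgentType.
Context {l : 'I_k} {tau : agent_type m Om}.

Lemma interim_win_le_mass b :
  interim_win x M p sigma l tau b <= \sum_(t : profile k m Om) prof_prob p t.
Proof.
rewrite [X in _ <= X](bigID (fun t : profile k m Om => t l == tau)) /=.
rewrite -[X in X <= _]addr0; apply: lerD.
  apply: ler_sum => t _; rewrite -[X in _ <= X]mulr1.
  by apply: ler_wpM2l; [exact/ltW/prof_prob_gt0 | case: wins].
by apply: sumr_ge0 => t _; exact/ltW/prof_prob_gt0.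
Qed.

Lemma interim_win_ge_prob {b t} : t l = tau ->
  wins l (accepted x M t (dev_actions sigma t l b)) ->
  prof_prob p t <= interim_win x M p sigma l tau b.
Proof.
move=> /eqP t_tau t_wins; rewrite /interim_win /interim (bigD1 t) //= t_wins mulr1.
rewrite lerDl; apply: sumr_ge0 => t' _.
by apply: mulr_ge0; [exact/ltW/prof_prob_gt0 | exact: ler0n].
Qed.

Lemma interim_win_gt0P {b} : 0 < interim_win x M p sigma l tau b ->
  exists2 t : profile k m Om,
    t l = tau & wins l (accepted x M t (dev_actions sigma t l b)).
Proof.
pose win_at t := (t l == tau) && wins l (accepted x M t (dev_actions sigma t l b)).
case: (pickP win_at) => [t /andP [/eqP t_tau t_wins] _ | no_win]; first by exists t.
rewrite /interim_win /interim big1 ?ltxx // => t t_tau.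
by have := no_win t; rewrite /win_at t_tau /= => ->; rewrite mulr0.
Qed.

Lemma interim_win_gt0_accset {b} :
  0 < interim_win x M p sigma l tau b -> accset M l b (tau b).
Proof.
case/interim_win_gt0P => t <- /wins_accepted [_].
by rewrite acceptable_dev.
Qed.

Lemma interim_agent_util (y : 'I_k -> 'I_m -> Om -> R) b :
  interim x M p sigma l tau b (agent_util y l)
    = y l b (tau b) * interim_win x M p sigma l tau b.
Proof.
rewrite /interim_win /interim mulr_sumr; apply: eq_bigr => t /eqP t_tau.
rewrite mulrCA; congr (_ * _).
case t_wins: (wins l _).
  have [-> _] := wins_accepted t_wins.
  by rewrite /agent_util /dev_actions !eqxx t_tau mulr1.
move: t_wins; rewrite mulr0; case: accepted => [[[i j] w]|] //=.
by move/negbT/negbTE => ->.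
Qed.

Lemma interim_principal_util_le (a b : 'I_m) :
  accset M l a (tau a) -> accset M l b (tau b) -> x (tau a) <= x (tau b) ->
  interim x M p sigma l tau a (principal_util x)
    <= interim x M p sigma l tau b (principal_util x).
Proof.
move=> acc_a acc_b le_ab; apply: ler_sum => t /eqP t_tau.
apply: ler_wpM2l; first exact/ltW/prof_prob_gt0.
apply: (accepted_util_le _ _ _ l).
- by move=> i ne; rewrite /dev_actions (negbTE ne).
- by rewrite acceptable_dev t_tau.
- by rewrite acceptable_dev t_tau.
- by rewrite /dev_actions eqxx t_tau.
Qed.

End AgentType.

Section Equilibrium.
Context {y : Om -> R} {c d : R}.
Hypotheses (y_gt0 : forall w, 0 < y w)
  (y_sep : forall w1 w2, x w1 < x w2 -> c * y w2 <= y w1)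
  (d_gt0 : 0 < d) (d_le_prob : forall t, d <= prof_prob p t)
  (mass_lt_cd : \sum_(t : profile k m Om) prof_prob p t < c * d)
  (sigma_eq : strategic_eq x M p (fun _ _ => y) sigma).

Lemma strategic_best_response l tau b :
  0 < interim_win x M p sigma l tau b ->
  0 < interim_win x M p sigma l tau (sigma l tau) /\
  x (tau (sigma l tau)) <= x (tau b).
Proof.
move=> Wb_gt0; have [t t_tau t_wins] := interim_win_gt0P Wb_gt0.
have d_le_Wb := le_trans (d_le_prob t) (interim_win_ge_prob t_tau t_wins).
have := (sigma_eq l tau b).1; rewrite !interim_agent_util.
set a := sigma l tau.
set Wa := interim_win _ _ _ _ _ _ a; set Wb := interim_win _ _ _ _ _ _ b.
move=> util_le.
have Wa_gt0 : 0 < Wa.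
  rewrite -(pmulr_rgt0 _ (y_gt0 (tau a))).
  by apply: lt_le_trans _ util_le; apply: mulr_gt0.
split => //; rewrite leNgt; apply/negP => /y_sep sep.
suff : y (tau a) * Wa < y (tau a) * Wa by rewrite ltxx.
have Wa_le_mass : Wa <= \sum_(t : profile k m Om) prof_prob p t := interim_win_le_mass _.
have y_gt0a := y_gt0 (tau a); have y_gt0b := y_gt0 (tau b).
apply: le_lt_trans (ler_wpM2l (ltW y_gt0a) Wa_le_mass) _.
apply: lt_le_trans (_ : _ < y (tau a) * (c * d)) _; first by rewrite ltr_pM2l.
rewrite mulrA (mulrC _ c); apply: le_trans (ler_wpM2r (ltW d_gt0) sep) _.
exact: le_trans (ler_wpM2l (ltW y_gt0b) d_le_Wb) util_le.
Qed.

Lemma strategic_eq_adversarial : adversarial_eq x M p sigma.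
Proof.
move=> l tau b Wb_gt0.
have [Wa_gt0 le_ab] := strategic_best_response l tau b Wb_gt0.
by split=> //; apply: interim_principal_util_le => //; exact: interim_win_gt0_accset.
Qed.

End Equilibrium.

End Interim.

End SingleProposal.

Section RankWeight.
Context {R : numDomainType} {Om : finType} (x : Om -> R).

Definition rank_weight (c : R) (w : Om) : R := c ^+ #|[pred w' | x w < x w']|.

Lemma rank_weight_gt0 c w : 0 < c -> 0 < rank_weight c w.
Proof. exact: exprn_gt0. Qed.

Lemma rank_weight_sep c w1 w2 : 1 <= c -> x w1 < x w2 ->
  c * rank_weight c w2 <= rank_weight c w1.
Proof.
move=> c_ge1 lt12; rewrite /rank_weight -exprS; apply: ler_weXn2l => //.
apply: proper_card; apply/properP; split.
  by apply/subsetP => w; rewrite !inE; apply: lt_trans.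
by exists w2; rewrite !inE ?lt12 ?ltxx.
Qed.

End RankWeight.

Theorem mainTheorem9 (R : realType) (k m : nat) (Om : finType)
  (p : Om -> R) (x : Om -> R)
  (p_pos : forall w, 0 < p w) (p_sum : \sum_(w : Om) p w = 1) :
  exists y : 'I_k -> 'I_m -> Om -> R,
    forall (M' : SPM k m Om) (sigma' : strategy k m Om),
      strategic_eq x M' p y sigma' ->
      exists (M : SPM k m Om) (sigma : strategy k m Om),
        adversarial_eq x M p sigma /\
        forall t : profile k m Om,
          outcome_map x M sigma t = outcome_map x M' sigma' t.
Proof.
pose mass := \sum_(t : profile k m Om) prof_prob p t.
pose d := \big[Num.min/1]_(t : profile k m Om) prof_prob p t.
have d_gt0 : 0 < d by apply: lt_bigmin => // t _; exact: prof_prob_gt0.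
have d_le_prob (t : profile k m Om) : d <= prof_prob p t by exact: bigmin_le.
pose c := mass / d + 1.
have c_ge1 : 1 <= c.
  by rewrite lerDr divr_ge0 ?(ltW d_gt0) ?sumr_ge0 // => t _; exact/ltW/prof_prob_gt0.
have mass_lt_cd : mass < c * d by rewrite mulrDl divfK ?gt_eqF // mul1r ltrDl.
exists (fun _ _ => rank_weight x c) => M' sigma' sigma'_eq.
exists M', sigma'; split=> //.
apply: (strategic_eq_adversarial p_pos _ _ d_gt0 d_le_prob mass_lt_cd sigma'_eq).
- by move=> w; apply: rank_weight_gt0; exact: lt_le_trans c_ge1.
- by move=> w1 w2; exact: rank_weight_sep.
Qed.
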